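(* For every vertex $v$ of $G^{(\rho)}_{n,\ell}$, there are at least $n^{\Omega(\log\ell)}$ directed paths starting or ending at $v$.
   Context: The instance $G^{(\rho)}_{n,\ell}$ (with $\rho>0$ a small constant): integers $m$ and $1/\epsilon$ with $\epsilon\rho m\in\mathbb N$, $\ell=3/\epsilon$, $\epsilon m=\omega(\log m)$; ground set $[m]$. Layers $L_0,\dots,L_\ell$: $L_0=\{s\}$ with label $\emptyset$; for $1\le i<2/\epsilon$, $L_i$ has one vertex for each subset of $[m]$ of size $i\epsilon\rho m$ (its label); for $2/\epsilon\le i\le 3/\epsilon$, one vertex for each subset of size $(4-i\epsilon)\rho m$. For $u\in L_{i-1},v\in L_i$ there is an edge $(u,v)$ iff $S_u\subseteq S_v$ (if $i\le 2/\epsilon$) or $S_v\subseteq S_u$ (if $i>2/\epsilon$), where $S_w$ is the label of $w$. $n$ is the number of vertices, $n=2^{\Theta(m)}$. *)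

From Stdlib Require Export Reals.
From HB Require Import structures.
From mathcomp Require Import all_boot.


(* Parametrisation: k = 1/epsilon (a positive integer), t = epsilon*rho*m
   (a natural number), ground set [m] = 'I_m, ell = 3/epsilon = 3*k.
   Layer i (0 <= i <= 3k) consists of the subsets of size lsize k t i:
     i < 2/eps          : i * eps*rho*m        = i * t
     2/eps <= i <= 3/eps: (4 - i*eps)*rho*m    = (4k - i) * t
   (layer 0 is the single vertex s with label set0). *)
Definition lsize (k t i : nat) : nat :=
  if (i < 2 * k)%N then (i * t)%N else ((4 * k - i) * t)%N.

Definition isvtx (m k t : nat) : pred ('I_(3 * k).+1 * {set 'I_m}) :=
  fun x => #|x.2| == lsize k t x.1.

Definition vtx (m k t : nat) := {x | isvtx m k t x}.
HB.instance Definition _ (m k t : nat) := Finite.on (vtx m k t).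

Definition layer m k t (v : vtx m k t) : nat := (val v).1.
Definition label m k t (v : vtx m k t) : {set 'I_m} := (val v).2.

Definition gedge (m k t : nat) : rel (vtx m k t) := fun u v =>
  (layer m k t v == (layer m k t u).+1) &&
  (if (layer m k t v <= 2 * k)%N then label m k t u \subset label m k t v
   else label m k t v \subset label m k t u).

Definition nverts (m k t : nat) : nat := #|{: vtx m k t}|.

(* Every directed path has fewer than n edges (the graph
   is a DAG), so summing over j < n counts all of them. *)
Definition npaths (m k t : nat) (v : vtx m k t) : nat :=
  \sum_(j < nverts m k t)
    #|[set xp : vtx m k t * j.-tuple (vtx m k t) |
        path (gedge m k t) xp.1 xp.2 &&
        ((xp.1 == v) || (last xp.1 xp.2 == v))]|.

From Pilot Require Import Defs.
From Stdlib Require Import Reals Lra.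
From mathcomp Require Import all_boot zify.
From Coquelicot Require Rcomplements.
Set Implicit Arguments.
Unset Strict Implicit.

(* A neighbour of a vertex is obtained by adding t elements to its label or
   removing t of them, and rho <= 1/4 (i.e. 4kt <= m) leaves room for at least
   C((k+1)t, t) >= (k+1)^t choices.  So every vertex below the top layer has
   (k+1)^t out-neighbours and every vertex above layer k has (k+1)^t
   in-neighbours.  A vertex in a layer <= 2k therefore starts, and any other
   vertex ends, at least (k+1)^(tk) = (k+1)^(rho m) paths with k edges.  As
   n <= 4^m and ln(3k) <= 2 ln(k+1), this is at least n^(c ln(3k)) for
   c = rho / (2 ln 4). *)

Lemma expn_leq_bin a n t : a * t <= n -> a ^ t <= 'C(n, t).
Proof.
elim: t n => [|t IH] [|n] lean; rewrite ?bin0 //.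
  by case: a {IH} lean => [|a]; rewrite ?exp0n.
rewrite -(leq_pmul2l (ltn0Sn t)) -mul_bin_diag expnS mulnA.
apply: leq_mul; first by rewrite mulnC.
by apply: IH; nia.
Qed.

Lemma card_supsets (T : finType) (S : {set T}) t : t <= #|~: S| ->
  #|[set Y : {set T} | S \subset Y & #|Y| == #|S| + t]| = 'C(#|~: S|, t).
Proof.
move=> le_t; rewrite -bin_sub // -cards_draws -(card_preimset _ (@setC_inj T)).
apply: eq_card => Y; rewrite !inE subsetC; congr andb.
have := cardsC Y; have := cardsC S; lia.
Qed.

Section PathCounting.
Variables (T : finType) (e : rel T).

Definition paths_from (x : T) (j : nat) := [set p : j.-tuple T | path e x p].

Definition endpoint_paths (v : T) (j : nat) :=
  [set xp : T * j.-tuple T |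
     path e xp.1 xp.2 && ((xp.1 == v) || (last xp.1 xp.2 == v))].

Lemma card_paths_fromS x j :
  #|paths_from x j.+1| = \sum_(y | e x y) #|paths_from y j|.
Proof.
pose cons_pair (yq : T * j.-tuple T) := [tuple of yq.1 :: yq.2].
have cons_inj : injective cons_pair.
  by move=> [y q] [y' q'] /(congr1 val) [-> /val_inj ->].
have -> : paths_from x j.+1 =
    cons_pair @: [set yq : T * j.-tuple T | e x yq.1 && path e yq.1 yq.2].
  apply/setP => p; case/tupleP: p => y q; rewrite !inE.
  apply/idP/imsetP => [exy_q | [[y' q'] + ->]]; last by rewrite inE.
  by exists (y, q); rewrite ?inE.
rewrite card_imset // -sum1_card.
under [RHS]eq_bigr do rewrite -sum1_card.
by rewrite pair_big_dep; apply: eq_bigl => -[y q]; rewrite !inE.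
Qed.

Lemma expn_leq_card_paths_from (D : nat) (P : nat -> pred T) :
  (forall j x, P j.+1 x -> D <= #|[set y | e x y & P j y]|) ->
  forall j x, P j x -> D ^ j <= #|paths_from x j|.
Proof.
move=> degP; elim=> [|j IH] x Px.
  by rewrite card_gt0; apply/set0Pn; exists [tuple]; rewrite inE.
rewrite card_paths_fromS (bigID (P j)) /= expnS.
apply: leq_trans (leq_addr _ _).
apply: (leq_trans (leq_mul (degP j x Px) (leqnn (D ^ j)))).
rewrite -sum_nat_const [leqLHS]big_mkcond [leqRHS]big_mkcond /=.
by apply: leq_sum => y _; rewrite inE; case: ifP => // /andP[_ /IH].
Qed.

Lemma card_paths_from_le_endpoint v j :
  #|paths_from v j| <= #|endpoint_paths v j|.
Proof.
have pair_inj : injective (pair v : j.-tuple T -> T * j.-tuple T) by move=> p q [].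
rewrite -(card_imset _ pair_inj).
apply/subset_leq_card/subsetP => _ /imsetP[p + ->].
by rewrite !inE /= eqxx => ->.
Qed.

End PathCounting.

Lemma card_rev_paths_from_le_endpoint (T : finType) (e : rel T) v j :
  #|paths_from [rel x y | e y x] v j| <= #|endpoint_paths e v j|.
Proof.
pose rev_path_of (q : j.-tuple T) := (last v q, rev_tuple (belast_tuple v q)).
have rev_inj : injective rev_path_of.
  move=> p q [last_pq /(inv_inj (@revK _)) belast_pq]; apply: val_inj => /=.
  by have [] : v :: p = v :: q by rewrite !lastI last_pq belast_pq.
rewrite -(card_imset _ rev_inj).
apply/subset_leq_card/subsetP => _ /imsetP[p + ->].
rewrite !inE /= rev_path => ->.
by case: (tval p) => [|y s] /=; rewrite ?rev_cons ?last_rcons eqxx orbT.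
Qed.

Section LayeredGraph.
Variables m k t : nat.
Hypotheses (k_gt0 : 0 < k) (le_4kt_m : 4 * (k * t) <= m).

Local Notation V := (vtx m k t).
Local Notation layer := (layer m k t).
Local Notation label := (label m k t).
Local Notation gedge := (gedge m k t).
Local Notation lsize := (lsize k t).

Lemma lsize_le i : lsize i <= 2 * k * t.
Proof. rewrite /lsize; case: ifP; nia. Qed.

Lemma lsize_ge i : k < i < 3 * k -> k.+1 * t <= lsize i.
Proof. rewrite /lsize; case: ifP; nia. Qed.

Lemma lsizeS_up i : i < 2 * k -> lsize i.+1 = lsize i + t.
Proof. rewrite /lsize; do 2 case: ifP; nia. Qed.

Lemma lsizeS_down i : 2 * k <= i < 4 * k -> lsize i = lsize i.+1 + t.
Proof. rewrite /lsize; do 2 case: ifP; nia. Qed.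

Lemma card_label (v : V) : #|label v| = lsize (layer v).
Proof. exact: eqP (valP v). Qed.

Lemma card_layer_labels (j : 'I_(3 * k).+1) (F : {set {set 'I_m}}) :
  {in F, forall X : {set 'I_m}, #|X| = lsize j} ->
  #|F| <= #|[set w : V | (layer w == j) && (label w \in F)]|.
Proof.
move=> sizeF; apply: leq_trans (leq_imset_card label _).
apply/subset_leq_card/subsetP => X XF.
have Xv : isvtx m k t (j, X) by rewrite /isvtx /= sizeF.
by apply/imsetP; exists (Sub (j, X) Xv); rewrite // inE /Defs.layer /Defs.label SubK eqxx.
Qed.

Lemma up_degree (S : {set 'I_m}) (j : 'I_(3 * k).+1) : lsize j = #|S| + t ->
  k.+1 ^ t <= #|[set w : V | (layer w == j) && (S \subset label w)]|.
Proof.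
move=> sizeS.
have room : k.+1 * t <= #|~: S|.
  by have := cardsC S; have := lsize_le j; rewrite card_ord; nia.
apply: leq_trans (expn_leq_bin room) _.
rewrite -card_supsets ?(leq_trans _ room) ?leq_pmull //.
apply: leq_trans (card_layer_labels (j := j) _) _ => [Y|].
  by rewrite inE sizeS => /andP[_ /eqP].
by apply/subset_leq_card/subsetP => w; rewrite !inE => /andP[-> /andP[-> _]].
Qed.

Lemma down_degree (S : {set 'I_m}) (j : 'I_(3 * k).+1) :
  #|S| = lsize j + t -> k.+1 * t <= #|S| ->
  k.+1 ^ t <= #|[set w : V | (layer w == j) && (label w \subset S)]|.
Proof.
move=> sizeS room.
apply: leq_trans (expn_leq_bin room) _.
have le_t : t <= #|S| by rewrite sizeS leq_addl.
rewrite -bin_sub // -cards_draws.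
apply: leq_trans (card_layer_labels (j := j) _) _ => [X|].
  by rewrite inE sizeS addnK => /andP[_ /eqP].
by apply/subset_leq_card/subsetP => w; rewrite !inE => /andP[-> /andP[-> _]].
Qed.

Lemma out_degree (v : V) : layer v < 3 * k ->
  k.+1 ^ t <= #|[set w | gedge v w]|.
Proof.
move=> lt_v; have lt_j : (layer v).+1 < (3 * k).+1 by [].
case: (leqP (layer v).+1 (2 * k)) => le_j.
- apply: leq_trans (up_degree (S := label v) (j := Ordinal lt_j) _) _.
    by rewrite /= lsizeS_up // card_label.
  apply/subset_leq_card/subsetP => w; rewrite !inE => /andP[/eqP vw sub].
  by rewrite /Defs.gedge vw /= eqxx le_j.
- apply: leq_trans (down_degree (S := label v) (j := Ordinal lt_j) _ _) _.
  + by rewrite /= card_label lsizeS_down //; lia.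
  + by rewrite card_label lsize_ge //; lia.
  apply/subset_leq_card/subsetP => w; rewrite !inE => /andP[/eqP vw sub].
  by rewrite /Defs.gedge vw /= eqxx leqNgt le_j.
Qed.

Lemma in_degree (v : V) : k < layer v ->
  k.+1 ^ t <= #|[set u | gedge u v]|.
Proof.
move=> gt_v; have lt_j : (layer v).-1 < (3 * k).+1.
  by have := ltn_ord (val v).1; rewrite /Defs.layer; lia.
pose j := Ordinal lt_j; have vS : layer v = j.+1 by rewrite /=; lia.
case: (leqP (layer v) (2 * k)) => le_v.
- apply: leq_trans (down_degree (S := label v) (j := j) _ _) _.
  + by rewrite card_label vS lsizeS_up //; lia.
  + by rewrite card_label lsize_ge //; lia.
  apply/subset_leq_card/subsetP => u; rewrite !inE => /andP[/eqP uv sub].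
  by rewrite /Defs.gedge vS uv /= eqxx -vS le_v.
- apply: leq_trans (up_degree (S := label v) (j := j) _) _.
    by rewrite card_label vS -lsizeS_down //; lia.
  apply/subset_leq_card/subsetP => u; rewrite !inE => /andP[/eqP uv sub].
  by rewrite /Defs.gedge vS uv /= eqxx -vS leqNgt le_v.
Qed.

Lemma expn_leq_card_endpoint_paths (v : V) :
  k.+1 ^ (t * k) <= #|endpoint_paths gedge v k|.
Proof.
rewrite expnM; case: (leqP (layer v) (2 * k)) => le_v.
- apply: leq_trans _ (card_paths_from_le_endpoint _ _ _).
  apply: (expn_leq_card_paths_from (P := fun j w => layer w + j <= 3 * k)).
    move=> j w le_w; have lt_w : layer w < 3 * k by lia.
    apply: leq_trans (out_degree lt_w) _.
    apply/subset_leq_card/subsetP => u; rewrite !inE => wu; rewrite wu /=.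
    by case/andP: wu => /eqP lu _; lia.
  by rewrite /=; lia.
- apply: leq_trans _ (card_rev_paths_from_le_endpoint _ _ _).
  apply: (expn_leq_card_paths_from (P := fun j w => k + j < layer w)).
    move=> j w lt_w; have gt_w : k < layer w by lia.
    apply: leq_trans (in_degree gt_w) _.
    apply/subset_leq_card/subsetP => u; rewrite !inE /= => uw; rewrite uw /=.
    by case/andP: uw => /eqP lw _; lia.
  by rewrite /=; lia.
Qed.

Lemma ltn_nverts (v : V) : 0 < t -> k < nverts m k t.
Proof.
move=> t_gt0; have le_k : k.+1 <= k.+1 ^ t by rewrite -{1}(expn1 k.+1) leq_pexp2l.
apply: leq_trans le_k _; case: (ltnP (layer v) (3 * k)) => [lt_v | le_v].
  exact: leq_trans (out_degree lt_v) (max_card _).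
have gt_v : k < layer v by lia.
exact: leq_trans (in_degree gt_v) (max_card _).
Qed.

Lemma npaths_ge (v : V) : 0 < t -> k.+1 ^ (t * k) <= npaths m k t v.
Proof.
move=> t_gt0; have lt_k := ltn_nverts v t_gt0.
apply: leq_trans (expn_leq_card_endpoint_paths v) _.
by rewrite /npaths (bigD1 (Ordinal lt_k)) //= leq_addr.
Qed.

Lemma nverts_le : nverts m k t <= (3 * k).+1 * 2 ^ m.
Proof.
rewrite /nverts (leq_trans (leq_card _ val_inj)) //.
by rewrite card_prod card_ord -cardsT -powersetT card_powerset cardsT card_ord.
Qed.

Lemma nverts_le_expn4 : 0 < t -> nverts m k t <= 4 ^ m.
Proof.
move=> t_gt0; apply: leq_trans nverts_le _.
rewrite -[4]/(2 * 2) expnMn leq_mul2r; apply/orP; right.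
apply: leq_trans (ltnW (ltn_expl m (ltnSn 1))); nia.
Qed.

End LayeredGraph.

Open Scope R_scope.

Lemma INR_muln a b : INR (a * b)%N = INR a * INR b.
Proof. by rewrite -multE mult_INR. Qed.

Lemma INR_expn a b : INR (a ^ b)%N = INR a ^ b.
Proof. by elim: b => [|b IH]; rewrite ?expn0 // expnS INR_muln IH. Qed.

Lemma Rpower_le_Rpower x y a b : a * ln x <= b * ln y -> Rpower x a <= Rpower y b.
Proof.
rewrite /Rpower; case/Rle_lt_or_eq_dec => [/exp_increasing/Rlt_le | ->] //.
exact: Rle_refl.
Qed.

Lemma ln_mul3_le x : 1 <= x -> ln (3 * x) <= 2 * ln (x + 1).
Proof.
move=> x_ge1; rewrite -[2]/(INR 2) -ln_pow; last lra.
by apply: Rcomplements.ln_le; [lra | rewrite /=; nra].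
Qed.

Lemma Rpower_ln_mul3_le rho N x y :
  0 < rho -> 1 <= x -> 1 <= N -> ln N <= y * ln 4 ->
  Rpower N (rho / (2 * ln 4) * ln (3 * x)) <= Rpower (x + 1) (rho * y).
Proof.
move=> rho_gt0 x_ge1 N_ge1 lnN.
have ln4_gt0 : 0 < ln 4 by rewrite -ln_1; apply: ln_increasing; lra.
have lnN_ge0 : 0 <= ln N by rewrite -ln_1; apply: Rcomplements.ln_le; lra.
have ln3x_ge0 : 0 <= ln (3 * x) by rewrite -ln_1; apply: Rcomplements.ln_le; lra.
have ln3x := ln_mul3_le x_ge1.
apply: Rpower_le_Rpower.
set c := rho / (2 * ln 4); have c_gt0 : 0 < c by apply: Rdiv_lt_0_compat; lra.
have -> : rho * y * ln (x + 1) = c * (2 * ln (x + 1)) * (y * ln 4).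
  by rewrite /c; field; lra.
apply: Rmult_le_compat => //; first exact: Rmult_le_pos (Rlt_le _ _ c_gt0) _.
exact: Rmult_le_compat_l (Rlt_le _ _ c_gt0) _.
Qed.

Theorem lemma8 :
  exists rho0 : R, 0 < rho0 /\
  forall rho : R, 0 < rho -> rho <= rho0 ->
  exists c : R, 0 < c /\
  exists K M : R,
  forall m k t : nat,
    (1 <= k)%nat ->
    INR t = rho * INR m / INR k ->
    M <= INR m ->
    K * ln (INR m) <= INR m / INR k ->
    forall v : vtx m k t,
      Rpower (INR (nverts m k t)) (c * ln (INR (3 * k)))
        <= INR (npaths m k t v).
Proof.
exists (1 / 4); split; first lra.
move=> rho rho_gt0 rho_le.
have ln4_gt0 : 0 < ln 4 by rewrite -ln_1; apply: ln_increasing; lra.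
exists (rho / (2 * ln 4)); split; first by apply: Rdiv_lt_0_compat; lra.
exists 0, 1 => m k t k_ge1 tE m_ge1 _ v.
have k_ge1R : 1 <= INR k by apply: (le_INR 1); apply/leP.
have ktE : INR (t * k) = rho * INR m by rewrite INR_muln tE; field; lra.
have t_gt0 : (0 < t)%N.
  by apply/ltP/INR_lt; rewrite tE /=; apply: Rdiv_lt_0_compat; nra.
have le_4kt_m : (4 * (k * t) <= m)%N.
  by apply/leP/INR_le; rewrite [(k * t)%N]mulnC INR_muln ktE /=; nra.
have N_ge1 : 1 <= INR (nverts m k t).
  apply: (le_INR 1); apply/leP.
  exact: leq_ltn_trans (ltn_nverts k_ge1 le_4kt_m v t_gt0).
have lnN : ln (INR (nverts m k t)) <= INR m * ln 4.
  rewrite -ln_pow; last lra.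
  apply: Rcomplements.ln_le; first lra.
  rewrite (_ : 4 = INR 4); last by rewrite /=; lra.
  by rewrite -INR_expn; apply/le_INR/leP/nverts_le_expn4.
apply: Rle_trans (_ : Rpower (INR k + 1) (INR (t * k)) <= _).
  rewrite INR_muln ktE (_ : INR 3 = 3); first exact: Rpower_ln_mul3_le.
  by rewrite /=; lra.
rewrite Rpower_pow; last lra.
by rewrite -S_INR -INR_expn; apply/le_INR/leP/npaths_ge.
Qed.
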